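(* Suppose $w=w_1w_2\cdots w_n$ and $\tilde w=\tilde w_1\tilde w_2\cdots\tilde w_n$ are reduced words with $\tilde w_i-w_i\in\{0,1\}$ for all $i\in[n]$. Then $Q_{\mathsf{EG}}(w)=Q_{\mathsf{EG}}(\tilde w)$.
   Context: $S_\mathbb{Z}$ is the group of finitely supported permutations of $\mathbb{Z}$ with generators $s_i=(i,i+1)$; a reduced word (for some $\sigma\in S_\mathbb{Z}$) is a minimal-length word $i_1\cdots i_l$ with $\sigma=s_{i_1}\cdots s_{i_l}$. Tableaux are fillings of Young diagrams of partitions (French notation, rows numbered bottom to top). Edelman–Greene insertion of a reduced word $w=w_1\cdots w_n$: starting from the empty tableau, insert $w_1,\dots,w_n$ in turn, each starting in the first row; when $x$ is inserted into a row, let $y$ be the smallest entry in the row with $x\le y$; if none exists, $x$ is added to the end of the row; if $x=y$ the row is unchanged and $y+1$ is inserted into the next row; if $x<y$, $y$ is replaced by $x$ and $y$ is inserted into the next row. $Q_{\mathsf{EG}}(w)$ is the tableau of the resulting shape with entry $i$ in the box added when inserting $w_i$. *)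

From mathcomp Require Import all_boot all_order all_algebra.
Set Implicit Arguments. Unset Strict Implicit. Unset Printing Implicit Defensive.
Import Order.TTheory GRing.Theory Num.Theory.
Local Open Scope ring_scope.

Definition stransp (i : int) (x : int) : int :=
  if x == i then i + 1 else if x == i + 1 then i else x.

Definition perm_of_word (w : seq int) : int -> int :=
  foldr (fun i f => fun x => stransp i (f x)) id w.

Definition same_perm (v w : seq int) : Prop :=
  forall x : int, perm_of_word v x = perm_of_word w x.

Definition reduced_word (w : seq int) : Prop :=
  forall v : seq int, same_perm v w -> (size w <= size v)%N.

(* Tableaux: list of rows, row 0 = bottom row (French notation). *)
(* Edelman–Greene insertion of x into tableau P, starting at the first row.
   Returns the new tableau and the (0-based) index of the row where a box
   was added. *)
Fixpoint eg_insert (x : int) (P : seq (seq int)) : seq (seq int) * nat :=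
  match P with
  | [::] => ([:: [:: x]], 0%N)
  | r :: rs =>
      let j := find (fun y => x <= y) r in
      if j == size r then (rcons r x :: rs, 0%N)
      else
        let y := nth 0 r j in
        if x == y then
          let: (P', k) := eg_insert (y + 1) rs in (r :: P', k.+1)
        else
          let: (P', k) := eg_insert y rs in (set_nth 0 r j x :: P', k.+1)
  end.

Definition add_box (Q : seq (seq nat)) (k : nat) (i : nat) : seq (seq nat) :=
  if (k < size Q)%N then set_nth [::] Q k (rcons (nth [::] Q k) i)
  else rcons Q [:: i].

Definition eg_step (PQ : seq (seq int) * seq (seq nat)) (iw : nat * int)
  : seq (seq int) * seq (seq nat) :=
  let: (P, Q) := PQ in
  let: (P', k) := eg_insert iw.2 P in (P', add_box Q k iw.1).

(* Q_EG(w): entry i (1-based) in the box added when inserting w_i. *)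
Definition Q_EG (w : seq int) : seq (seq nat) :=
  (foldl eg_step ([::], [::]) (zip (iota 1 (size w)) w)).2.

From mathcomp Require Import all_boot all_order all_algebra zify.
Import Order.TTheory GRing.Theory Num.Theory.
Set Implicit Arguments.
Unset Strict Implicit.
Unset Printing Implicit Defensive.
Local Open Scope ring_scope.

(* Insert w and w~ in parallel.  The two insertion tableaux keep the same shape
   with entries related by b - a in {0, 1}, so each pair of insertions adds a
   box in the same row.  Comparing x <= y with x~ <= y~ along a row, the two
   insertions can only part ways when x = y = y~ and x~ = x + 1, or when
   x = x~ = y~ = y + 1.  There, reducedness of the reading word followed by the
   inserted letter forces the entry after the equal one to be its successor
   (else s_x s_x would appear up to commutations), and the two insertions meet
   again one entry later. *)

Lemma all2_nth (S T : Type) (r : S -> T -> bool) (x0 : S) (y0 : T) s t :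
  size s = size t ->
  (forall i, (i < size s)%N -> r (nth x0 s i) (nth y0 t i)) -> all2 r s t.
Proof.
elim: s t => [|x s IH] [|y t] //= [size_st] r_st.
by rewrite (r_st 0%N) //= IH // => i; apply: (r_st i.+1).
Qed.

Lemma stransp_comm i j x : i + 1 < j ->
  stransp i (stransp j x) = stransp j (stransp i x).
Proof. by rewrite /stransp; repeat case: eqP; lia. Qed.

Lemma stranspK i : cancel (stransp i) (stransp i).
Proof. by move=> x; rewrite /stransp; repeat case: eqP; lia. Qed.

Lemma stransp_braid i x :
  stransp i (stransp (i + 1) (stransp i x)) =
  stransp (i + 1) (stransp i (stransp (i + 1) x)).
Proof. by rewrite /stransp; repeat case: eqP; lia. Qed.

Lemma perm_of_word_cat a b x :
  perm_of_word (a ++ b) x = perm_of_word a (perm_of_word b x).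
Proof. by elim: a => //= i a ->. Qed.

Lemma same_perm_catl a v w : same_perm v w -> same_perm (a ++ v) (a ++ w).
Proof. by move=> eq_vw x; rewrite !perm_of_word_cat eq_vw. Qed.

Lemma same_perm_catr a v w : same_perm v w -> same_perm (v ++ a) (w ++ a).
Proof. by move=> eq_vw x; rewrite !perm_of_word_cat eq_vw. Qed.

Lemma same_perm_cons i v w : same_perm v w -> same_perm (i :: v) (i :: w).
Proof. by move=> eq_vw x /=; rewrite eq_vw. Qed.

Lemma same_perm_commute (x : int) s :
  all (fun t => x + 1 < t) s -> same_perm (x :: s) (s ++ [:: x]).
Proof.
elim: s => // t s IH /andP[xt /IH eq_s] y.
by rewrite [perm_of_word (t :: _) _]/= -eq_s /= (stransp_comm _ xt).
Qed.

Lemma reduced_word_same_perm v w :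
  reduced_word w -> same_perm v w -> size v = size w -> reduced_word v.
Proof.
move=> red_w eq_vw eq_size u eq_uv; rewrite eq_size.
by apply: red_w => x; rewrite eq_uv.
Qed.

Lemma reduced_word_infix a b c : reduced_word (a ++ b ++ c) -> reduced_word b.
Proof.
move=> red_abc v eq_vb; have := red_abc (a ++ v ++ c).
rewrite !size_cat leq_add2l leq_add2r; apply.
exact/same_perm_catl/same_perm_catr.
Qed.

Lemma reduced_word_prefix a b : reduced_word (a ++ b) -> reduced_word a.
Proof. exact: (@reduced_word_infix [::]). Qed.

Lemma reduced_word_suffix a b : reduced_word (a ++ b) -> reduced_word b.
Proof. by move=> red; apply: (@reduced_word_infix a b [::]); rewrite cats0. Qed.

Lemma not_reduced_repeat x s : ~ reduced_word (x :: x :: s).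
Proof.
move=> /(_ s) red; suff /red : same_perm s [:: x, x & s].
  by rewrite ltnNge leqnSn.
by move=> y; rewrite /= stranspK.
Qed.

Definition seq_of_opt {T : Type} (o : option T) : seq T :=
  if o is Some c then [:: c] else [::].

Fixpoint row_insert (x : int) (r : seq int) : option int * seq int :=
  match r with
  | [::] => (None, [:: x])
  | y :: r' =>
      if x <= y then (if x == y then (Some (y + 1), r) else (Some y, x :: r'))
      else ((row_insert x r').1, y :: (row_insert x r').2)
  end.

Fixpoint row_admissible (x : int) (r : seq int) : bool :=
  match r with
  | [::] => true
  | y :: r' =>
      if x <= y then (x == y) ==> (ohead r' == Some (x + 1))
      else row_admissible x r'
  end.

Definition shift01 (a b : int) : bool := (b - a == 0) || (b - a == 1).

Lemma row_insertE x r : row_insert x r =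
  let j := find (fun y => x <= y) r in
  if j == size r then (None, rcons r x)
  else if x == nth 0 r j then (Some (nth 0 r j + 1), r)
  else (Some (nth 0 r j), set_nth 0 r j x).
Proof.
elim: r => //= y r ->; case: ifP => //= _.
by rewrite eqSS; case: ifP => //=; case: ifP.
Qed.

Lemma row_insert_size x r :
  (size (seq_of_opt (row_insert x r).1) + size (row_insert x r).2
   = (size r).+1)%N.
Proof.
elim: r => //= y r IH; case: ifP => _; first by case: ifP.
by rewrite /= addnS IH.
Qed.

Lemma row_insert_all (p : pred int) x r :
  p x -> all p r -> all p (row_insert x r).2.
Proof.
move=> px; elim: r => /= [|y r IH]; first by rewrite px.
by case/andP=> py pr; case: ifP => _; [case: ifP|]; rewrite /= ?py ?px ?pr ?IH.
Qed.

Lemma row_insert_bump x r c : (row_insert x r).1 = Some c -> x < c.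
Proof.
elim: r => //= y r IH; case: ifP => [x_le_y|_ /IH //].
by case: eqP => [->|x_neq_y] [<-]; lia.
Qed.

Lemma sorted_lt_cons (y : int) s :
  sorted <%R (y :: s) = all (<%R y) s && sorted <%R s.
Proof. by rewrite /= path_sortedE //; apply: lt_trans. Qed.

Lemma row_insert_sorted x r :
  sorted <%R r -> sorted <%R (row_insert x r).2.
Proof.
elim: r => // y r IH; rewrite sorted_lt_cons => /andP[gt_y sorted_r] /=.
case: ifP => [x_le_y|x_gt_y].
  case: eqP => [_|x_neq_y]; rewrite sorted_lt_cons ?gt_y ?sorted_r //= andbT.
  by apply: sub_all gt_y => t; lia.
rewrite sorted_lt_cons IH // andbT.
by apply: row_insert_all => //; rewrite /= ltNge x_gt_y.
Qed.

Lemma row_admissible_reduced x r :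
  sorted <%R r -> reduced_word (r ++ [:: x]) -> row_admissible x r.
Proof.
elim: r => // y r IH; rewrite sorted_lt_cons => /andP[gt_y sorted_r] red /=.
case: ifP => [x_le_y|_]; last first.
  by apply: IH => //; apply: (@reduced_word_infix [:: y] _ [::]); rewrite cats0.
apply/implyP => /eqP x_eq_y; subst y.
case: r gt_y sorted_r red {IH} => [|z r].
  by move=> _ _ /not_reduced_repeat.
rewrite sorted_lt_cons /= => /andP[x_lt_z _] /andP[gt_z _] red.
have [->//|z_neq] := eqVneq z (x + 1).
have x1_lt_z : x + 1 < z by move: z_neq x_lt_z; lia.
have far_x : all (fun t => x + 1 < t) (z :: r).
  by rewrite /= x1_lt_z; apply: sub_all gt_z => t; lia.
have size_eq : size [:: x, x, z & r] = size ((x :: z :: r) ++ [:: x]).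
  by rewrite size_cat addn1.
case: (@not_reduced_repeat x (z :: r)).
apply: (reduced_word_same_perm red) size_eq.
exact/same_perm_cons/same_perm_commute.
Qed.

Lemma row_insert_same_perm x r : sorted <%R r -> row_admissible x r ->
  same_perm (seq_of_opt (row_insert x r).1 ++ (row_insert x r).2) (r ++ [:: x]).
Proof.
elim: r => [_ _ t //|y r IH]; rewrite sorted_lt_cons => /andP[gt_y sorted_r] /=.
case: ifP => [x_le_y|x_gt_y]; last first.
  move/(IH sorted_r); case E: (row_insert x r) => [[c|] r'] eq_r /=; last first.
    exact: same_perm_cons.
  have /row_insert_bump x_lt_c : (row_insert x r).1 = Some c by rewrite E.
  have y1_lt_c : y + 1 < c by lia.
  by move=> t; rewrite /= -(eq_r t) /= (stransp_comm _ y1_lt_c).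
have [<-{x_le_y}|x_neq_y] /= := eqVneq x y.
  case: r gt_y sorted_r {IH} => // z r _; rewrite sorted_lt_cons /=.
  move=> /andP[gt_z _] /eqP[z_eq] t; subst z.
  rewrite [perm_of_word [:: x, _ & _] t]/= -(same_perm_commute gt_z) /=.
  by rewrite stransp_braid.
move=> _; apply/same_perm_cons/same_perm_commute.
by apply: sub_all gt_y => t; move: x_le_y x_neq_y; lia.
Qed.

Lemma row_insert_shift01 x xt r rt :
  shift01 x xt -> all2 shift01 r rt ->
  row_admissible x r -> row_admissible xt rt ->
  all2 shift01 (seq_of_opt (row_insert x r).1)
               (seq_of_opt (row_insert xt rt).1) &&
  all2 shift01 (row_insert x r).2 (row_insert xt rt).2.
Proof.
elim: r rt x xt => [|y r IH] [|yt rt] //= x xt xxt; first by rewrite xxt.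
case/andP=> yyt rrt; case: ifP => x_le_y; case: ifP => xt_le_yt.
- case: (x =P y) => [x_eq_y|x_ne_y]; case: (xt =P yt) => [xt_eq_yt|xt_ne_yt];
    move=> /= _ _; rewrite ?rrt ?andbT; move: xxt yyt; rewrite /shift01; lia.
- have x_eq_y : x = y.
    by move: xxt yyt x_le_y xt_le_yt; rewrite /shift01; lia.
  subst x; rewrite eqxx /=.
  case: r rrt {IH} => [|z r]; case: rt => [|zt rt] //=.
  move=> /andP[zzt rrt] /eqP[z_eq] _.
  case: ifP => xt_le_zt; [case: (xt =P zt) => [xt_eq|xt_ne]|] => /=;
    rewrite ?rrt ?andbT; move: xxt yyt zzt; rewrite /shift01; lia.
- have xt_eq_yt : xt = yt.
    by move: xxt yyt x_le_y xt_le_yt; rewrite /shift01; lia.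
  subst xt; rewrite eqxx /=.
  case: rt rrt {IH} => [|zt rt]; case: r => [|z r] //=.
  move=> /andP[zzt rrt] _ /eqP[zt_eq].
  case: ifP => x_le_z; [case: (x =P z) => [x_eq|x_ne]|] => /=;
    rewrite ?rrt ?andbT; move: xxt yyt zzt; rewrite /shift01; lia.
- by move=> adm admt /=; rewrite yyt; apply: IH.
Qed.

Definition reading_word (P : seq (seq int)) : seq int := flatten (rev P).

Lemma reading_word_cons r P : reading_word (r :: P) = reading_word P ++ r.
Proof. by rewrite /reading_word rev_cons -cats1 flatten_cat /= cats0. Qed.

Fixpoint eg_admissible (x : int) (P : seq (seq int)) : bool :=
  if P is r :: P' then
    row_admissible x r &&
    (if (row_insert x r).1 is Some c then eg_admissible c P' else true)
  else true.

Lemma eg_insert_cons x r P : eg_insert x (r :: P) =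
  if (row_insert x r).1 is Some c
  then ((row_insert x r).2 :: (eg_insert c P).1, (eg_insert c P).2.+1)
  else ((row_insert x r).2 :: P, 0%N).
Proof.
rewrite /= row_insertE /=; case: ifP => //= _.
by case: ifP => _ /=; case: (eg_insert _ P).
Qed.

Lemma eg_insert_sorted x P :
  all (sorted <%R) P -> all (sorted <%R) (eg_insert x P).1.
Proof.
elim: P x => // r P IH x /andP[sorted_r sorted_P]; rewrite eg_insert_cons.
have := row_insert_sorted x sorted_r.
by case: (row_insert x r).1 => [c|] /= ->; rewrite ?IH.
Qed.

Lemma eg_insert_size x P :
  size (reading_word (eg_insert x P).1) = (size (reading_word P)).+1.
Proof.
elim: P x => // r P IH x; rewrite eg_insert_cons.
have := row_insert_size x r; case: (row_insert x r) => [[c|] r'] /= size_r;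
  rewrite !reading_word_cons !size_cat ?IH; lia.
Qed.

Lemma eg_admissible_reduced x P : all (sorted <%R) P ->
  reduced_word (reading_word P ++ [:: x]) -> eg_admissible x P.
Proof.
elim: P x => // r P IH x /andP[sorted_r sorted_P].
rewrite reading_word_cons -catA => red.
have adm_r := row_admissible_reduced sorted_r (reduced_word_suffix red).
rewrite /= adm_r /=; have := row_insert_same_perm sorted_r adm_r.
have := row_insert_size x r.
case: (row_insert x r) => [[c|] r'] //= size_r perm_r.
apply: IH sorted_P _; apply: (@reduced_word_prefix _ r'); rewrite -catA /=.
apply: (reduced_word_same_perm red); first exact: same_perm_catl.
by move: size_r; rewrite !size_cat /=; lia.
Qed.

Lemma eg_insert_same_perm x P : all (sorted <%R) P -> eg_admissible x P ->
  same_perm (reading_word (eg_insert x P).1) (reading_word P ++ [:: x]).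
Proof.
elim: P x => [|r P IH] x; first by move=> _ _ t.
move=> /andP[sorted_r sorted_P] /andP[adm_r]; rewrite eg_insert_cons.
have := row_insert_same_perm sorted_r adm_r.
case: (row_insert x r) => [[c|] r'] /= perm_r adm_P t.
all: rewrite !reading_word_cons -catA.
  rewrite perm_of_word_cat (IH _ sorted_P adm_P) -perm_of_word_cat -catA.
all: exact: same_perm_catl perm_r t.
Qed.

Lemma eg_insert_shift01 x xt P Pt :
  shift01 x xt -> all2 (all2 shift01) P Pt ->
  eg_admissible x P -> eg_admissible xt Pt ->
  (eg_insert x P).2 = (eg_insert xt Pt).2 /\
  all2 (all2 shift01) (eg_insert x P).1 (eg_insert xt Pt).1.
Proof.
elim: P Pt x xt => [|r P IH] [|rt Pt] x xt xxt PPt //; first by rewrite /= xxt.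
case/andP: PPt => rrt PPt /andP[adm_r adm_P] /andP[admt_r admt_P].
rewrite !eg_insert_cons.
move: adm_P admt_P (row_insert_shift01 xxt rrt adm_r admt_r).
case: (row_insert x r) => [[c|] r'];
  case: (row_insert xt rt) => [[ct|] rt'] //=.
  move=> adm_P admt_P; rewrite andbT => /andP[cct ->].
  by have [-> ->] := IH _ _ _ cct PPt adm_P admt_P.
by move=> _ _ ->.
Qed.

Lemma eg_insert_reduced x P s :
  all (sorted <%R) P -> reduced_word (reading_word P ++ x :: s) ->
  eg_admissible x P /\ reduced_word (reading_word (eg_insert x P).1 ++ s).
Proof.
move=> sorted_P red.
have red_x : reduced_word (reading_word P ++ [:: x]).
  by apply: (@reduced_word_prefix _ s); rewrite -catA.
have adm := eg_admissible_reduced sorted_P red_x.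
split=> //; apply: (reduced_word_same_perm red).
  by rewrite -cat1s catA; apply/same_perm_catr/eg_insert_same_perm.
by rewrite !size_cat eg_insert_size /= addnS.
Qed.

Arguments eg_step : simpl never.

Lemma eg_stepE P Q i x :
  eg_step (P, Q) (i, x) = ((eg_insert x P).1, add_box Q (eg_insert x P).2 i).
Proof. by rewrite /eg_step; case: (eg_insert x P). Qed.

Lemma eg_recording_shift01 k w wt P Pt Q :
  all2 shift01 w wt -> all2 (all2 shift01) P Pt ->
  all (sorted <%R) P -> all (sorted <%R) Pt ->
  reduced_word (reading_word P ++ w) -> reduced_word (reading_word Pt ++ wt) ->
  (foldl eg_step (P, Q) (zip (iota k (size w)) w)).2 =
  (foldl eg_step (Pt, Q) (zip (iota k (size wt)) wt)).2.
Proof.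
elim: w wt k P Pt Q => [|x w IH] [|xt wt] // k P Pt Q /= /andP[xxt wwt] PPt.
move=> sorted_P sorted_Pt /(eg_insert_reduced sorted_P)[adm red].
move=> /(eg_insert_reduced sorted_Pt)[admt redt].
have [same_row PPt'] := eg_insert_shift01 xxt PPt adm admt.
rewrite !eg_stepE same_row.
by apply: IH => //; apply: eg_insert_sorted.
Qed.

Theorem proposition5p15 (n : nat) (w wt : seq int) :
  size w = n -> size wt = n ->
  reduced_word w -> reduced_word wt ->
  (forall i : nat, (i < n)%N ->
     (nth 0 wt i - nth 0 w i == 0) || (nth 0 wt i - nth 0 w i == 1)) ->
  Q_EG w = Q_EG wt.
Proof.
move=> size_w size_wt red_w red_wt shift_w.
apply: (@eg_recording_shift01 1 w wt [::] [::] [::]) => //.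
by apply: all2_nth => [|i]; rewrite ?size_w ?size_wt //; apply: shift_w.
Qed.
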